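(* For every integer $n\ge 0$, \[ \int_{0}^{1}\frac{1-x}{x}\,{}_{H}w_{n+1}(-x)\,dx=(-1)^{n}\frac{n-1}{2}B_{n}. \] Moreover, for integers $n\ge 0$, $m\ge 1$ with $n+m$ even, \[ \int_{0}^{1}\frac{1-x}{x}\,{}_{H}w_{n+1}(-x)\,w_{m}(-x)\,dx=(-1)^{n}\frac{n}{2}B_{n+m}. \]
   Context: $\genfrac{\{}{\}}{0pt}{}{n}{k}$ denotes the Stirling numbers of the second kind. The geometric polynomials are $w_n(x)=\sum_{k=0}^{n}\genfrac{\{}{\}}{0pt}{}{n}{k}k!\,x^k$. With $H_k=\sum_{i=1}^k 1/i$, the harmonic geometric polynomials are ${}_{H}w_n(x)=\sum_{k=1}^{n}\genfrac{\{}{\}}{0pt}{}{n}{k}k!\,H_k\,x^k$. $B_n$ are the Bernoulli numbers, $\sum_{n\ge0}B_n t^n/n!=t/(e^t-1)$ (so $B_1=-1/2$). *)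

From Stdlib Require Import Reals List Factorial.
From Coquelicot Require Import Coquelicot.
Import ListNotations.
Open Scope R_scope.

Fixpoint stirling2 (n k : nat) : nat :=
  match n, k with
  | O, O => 1%nat
  | O, S _ => 0%nat
  | S _, O => 0%nat
  | S n', S k' => (S k' * stirling2 n' (S k') + stirling2 n' k')%nat
  end.

Definition harmonic (k : nat) : R := sum_n_m (fun i => / INR i) 1 k.

Definition geom_poly (n : nat) (x : R) : R :=
  sum_n_m (fun k => INR (stirling2 n k) * INR (fact k) * x ^ k) 0 n.

Definition harm_geom_poly (n : nat) (x : R) : R :=
  sum_n_m (fun k => INR (stirling2 n k) * INR (fact k) * harmonic k * x ^ k) 1 n.

(* Bernoulli numbers with B_1 = -1/2, i.e. t/(e^t-1) = sum B_n t^n/n!,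
   computed by the equivalent recurrence B_0 = 1,
   sum_{k=0}^{n} C(n+1,k) B_k = 0 for n >= 1.
   bern_list n = [B_0; ...; B_n]. *)
Fixpoint bern_list (n : nat) : list R :=
  match n with
  | O => [1]
  | S m =>
      let l := bern_list m in
      l ++ [ - / INR (S n) *
             sum_n_m (fun k => Binomial.C (S n) k * nth k l 0) 0 m ]
  end.

Definition bernoulli (n : nat) : R := nth n (bern_list n) 0.

Example bern1 : bernoulli 1 = - / 2.
Proof. unfold bernoulli; simpl. rewrite sum_n_n. unfold Binomial.C; simpl. field. Qed.

From Stdlib Require Import Reals Lia.
From Coquelicot Require Import Coquelicot.
Open Scope R_scope.

From HB Require structures.
From mathcomp Require all_boot all_algebra Rstruct ring zify.

(* Write W_n(x) = w_n(-x), H_n(x) = Hw_n(-x) and mirror p = p(1 - x).  With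
   theta p = x ((1 - x) p)', the Stirling recurrence becomes
   W_(n+1) = theta W_n and H_(n+1) = theta H_n - x W_n, and B_n = int_0^1 W_n.
   Integrating by parts (the boundary term vanishes at 0 and 1) gives
   int (mirror (theta p)) q = int (mirror p) (theta q),
   hence int (mirror W_a) W_c = B_(a+c).  The identity
   mirror theta + theta mirror = -mirror gives the symmetry
   x mirror W_(n+1) = (-1)^n (1 - x) W_(n+1), the binomial identity
   sum_k C(n,k) W_k = (-1)^n mirror W_n (so B_n satisfies the Bernoulli
   recurrence, the odd ones beyond B_1 vanishing), and the symmetry
   mirror H_(n+1) = (-1)^n (1 - x) H_(n+1) / x - n mirror W_n.
   Telescoping H_(n+1) against the mirror W_c and pairing symmetric terms
   gives 2 int H_(n+1) = -(n+1) B_n, whence the first formula; in the second,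
   the symmetry of H turns the integral I into -I + (-1)^n n B_(n+m). *)

(* MathComp is imported only inside this module: outside it, [(1 <= m)%nat]
   in [theorem4] must keep denoting Stdlib's [le]. *)
Module HarmonicGeometric.
Import structures all_boot all_algebra Rstruct ring zify.
Import GRing.Theory Num.Theory.
Local Open Scope ring_scope.

Local Notation mirror p := (p \Po (1 - 'X)).

Lemma stirling2_0S k : stirling2 0 k.+1 = 0%N.
Proof. by []. Qed.

Lemma stirling2SS n k :
  stirling2 n.+1 k.+1 = (k.+1 * stirling2 n k.+1 + stirling2 n k)%N.
Proof. by []. Qed.

Lemma stirling2_small n k : (n < k)%N -> stirling2 n k = 0%N.
Proof. by elim: n k => [|n IH] [|k] // lt_nk; rewrite stirling2SS !IH ?muln0 // ltnW. Qed.

Section PolyOperators.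
Variable K : comNzRingType.
Implicit Types p q : {poly K}.

Definition delta p := ((1 - 'X) * p)^`().
Definition theta p := 'X * delta p.

Lemma theta_is_linear : linear theta.
Proof.
move=> a p q; rewrite /theta /delta mulrDr -scalerAr derivD derivZ.
by rewrite mulrDr scalerAr.
Qed.
HB.instance Definition _ :=
  GRing.isLinear.Build K {poly K} {poly K} *:%R theta theta_is_linear.

(* [wpoly n] is W_n, [hwpoly n] is H_n and [hwquot n] is H_(n+1) / x. *)
Fixpoint wpoly n : {poly K} := if n is n'.+1 then theta (wpoly n') else 1.

Fixpoint hwpoly n : {poly K} :=
  if n is n'.+1 then theta (hwpoly n') - 'X * wpoly n' else 0.

Definition hwquot n := delta (hwpoly n) - wpoly n.

Lemma wpoly0 : wpoly 0 = 1.
Proof. by []. Qed.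

Lemma wpolyS n : wpoly n.+1 = theta (wpoly n).
Proof. by []. Qed.

Lemma hwpoly0 : hwpoly 0 = 0.
Proof. by []. Qed.

Lemma hwpolyS n : hwpoly n.+1 = theta (hwpoly n) - 'X * wpoly n.
Proof. by []. Qed.

Lemma hwpoly_hwquot n : hwpoly n.+1 = 'X * hwquot n.
Proof. by rewrite hwpolyS /theta /hwquot mulrBr. Qed.

Lemma horner_hwpoly0 n : (hwpoly n).[0] = 0.
Proof. by case: n => [|n]; rewrite ?horner0 // hwpoly_hwquot hornerM hornerX mul0r. Qed.

Lemma coef_wpoly n k : (wpoly n)`_k = (-1) ^+ k * (stirling2 n k * k`!)%:R.
Proof.
elim: n k => [|n IH] [|k].
- by rewrite coef1 expr0 mul1r.
- by rewrite coef1 stirling2_0S mul0n mulr0.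
- by rewrite wpolyS /theta coefXM /= mulr0.
rewrite wpolyS /theta coefXM [LHS]/= /delta coef_deriv mulrBl mul1r coefB coefXM [LHS]/=.
rewrite !IH stirling2SS factS exprS !(natrM, natrD); ring.
Qed.

Lemma size_wpoly n : (size (wpoly n) <= n.+1)%N.
Proof. by apply/leq_sizeP => k lt_nk; rewrite coef_wpoly stirling2_small // mul0n mulr0. Qed.

Lemma horner_compl (x : K) : (1 - 'X).[x] = 1 - x.
Proof. by rewrite hornerD hornerN hornerX hornerC. Qed.

Lemma mirror1 : mirror 1 = 1 :> {poly K}.
Proof. by rewrite -polyC1 comp_polyC. Qed.

Lemma mirror_compl : mirror (1 - 'X) = 'X :> {poly K}.
Proof. by rewrite comp_polyB mirror1 comp_polyX opprB addrC subrK. Qed.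

Lemma mirrorK p : mirror (mirror p) = p.
Proof. by rewrite -comp_polyA mirror_compl comp_polyXr. Qed.

Lemma deriv_mirror p : (mirror p)^`() = - mirror p^`().
Proof. by rewrite deriv_comp !derivE sub0r mulrN1. Qed.

Lemma mirror_theta p : mirror (theta p) = - (mirror p + theta (mirror p)).
Proof.
have mirror_deriv q : mirror q^`() = - (mirror q)^`() by rewrite deriv_mirror opprK.
rewrite /theta /delta comp_polyM comp_polyX mirror_deriv comp_polyM mirror_compl !derivE.
ring.
Qed.

Lemma mul_delta_X q : (1 - 'X) * delta ('X * q) = (1 - 'X) * q + theta ((1 - 'X) * q).
Proof. rewrite /theta /delta !derivE; ring. Qed.

Lemma mirror_wpoly n :
  mirror (wpoly n.+1) = (-1) ^+ n *: ((1 - 'X) * delta (wpoly n)).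
Proof.
elim: n => [|n IH].
  by rewrite expr0 scale1r /= mirror_theta mirror1 /theta /delta !derivE; ring.
rewrite [wpoly n.+2]/= mirror_theta IH linearZ -scalerDr -mul_delta_X.
by rewrite exprS mulN1r scaleNr.
Qed.

Lemma mulX_mirror_wpoly n :
  'X * mirror (wpoly n.+1) = (-1) ^+ n *: ((1 - 'X) * wpoly n.+1).
Proof. by rewrite mirror_wpoly wpolyS /theta -!scalerAr; congr (_ *: _); ring. Qed.

Lemma mirror_hwpoly n :
  mirror (hwpoly n.+1) = (-1) ^+ n *: ((1 - 'X) * hwquot n) - mirror (wpoly n) *+ n.
Proof.
elim: n => [|n IH].
  rewrite /= /hwquot /= linear0 comp_polyB comp_polyM comp_polyX comp_poly0 mirror1.
  by rewrite /delta !derivE expr0 scale1r; ring.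
have eL : (1 - 'X) * delta (hwpoly n.+1)
          = (1 - 'X) * hwquot n + theta ((1 - 'X) * hwquot n).
  by rewrite hwpoly_hwquot mul_delta_X.
rewrite [hwquot n.+1]/hwquot mulrBr eL exprS mulN1r scaleNr scalerBr -mulX_mirror_wpoly.
rewrite hwpolyS comp_polyB (mirror_theta (hwpoly n.+1)) (comp_polyM 'X) comp_polyX IH.
rewrite [wpoly n.+1]/= mirror_theta linearB linearZ !linearMn /= scalerDr.
ring.
Qed.

Lemma sum_binomial_wpoly n :
  \sum_(k < n.+1) wpoly k *+ 'C(n, k) = (-1) ^+ n *: mirror (wpoly n).
Proof.
elim: n => [|n IH]; first by rewrite big_ord1 expr0 scale1r mirror1.
set S := \sum_(k < n.+1) _ in IH.
have eS : wpoly 0 *+ 1 + \sum_(k < n.+1) wpoly k.+1 *+ 'C(n, k.+1) = S.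
  rewrite -[1%N](bin0 n) -(big_ord_recl n.+1 (fun k => wpoly k *+ 'C(n, k))).
  by rewrite big_ord_recr /= bin_small // mulr0n addr0.
have eT : \sum_(k < n.+1) wpoly k.+1 *+ 'C(n, k) = theta S.
  by rewrite linear_sum; apply: eq_bigr => k _; rewrite linearMn.
rewrite big_ord_recl bin0 /=.
under eq_bigr do rewrite binS mulrnDr.
rewrite big_split /= addrA eS eT IH linearZ -scalerDr mirror_theta.
by rewrite exprS mulN1r scaleNr scalerN opprK.
Qed.

End PolyOperators.

Arguments delta {K} p.
Arguments theta {K} p : simpl never.
Arguments wpoly {K} n : simpl never.
Arguments hwpoly {K} n : simpl never.
Arguments hwquot {K} n.

Section Integral.
Implicit Types p q : {poly R}.

Lemma is_derive_horner p x : is_derive (horner p) x (p^`()).[x].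
Proof.
elim/poly_ind: p x => [|p c IH] x.
  rewrite deriv0 horner0.
  apply: (@is_derive_ext _ R_NormedModule (fun _ => 0)) => [t|]; first by rewrite horner0.
  exact: is_derive_const.
apply: (@is_derive_ext _ R_NormedModule (fun y => p.[y] * y + c)) => [t|].
  by rewrite hornerMXaddC.
rewrite derivMXaddC hornerD hornerM hornerX.
have := is_derive_plus _ _ x _ _
  (is_derive_mult _ _ x _ _ (IH x) (is_derive_id x) Rmult_comm) (is_derive_const c x).
by rewrite /plus /mult /one /zero /= Rmult_1_r Rplus_0_r Rplus_comm.
Qed.

Lemma ex_RInt_horner p a b : ex_RInt (horner p) a b.
Proof.
apply: ex_RInt_continuous => x _.
by apply: ex_derive_continuous; exists (p^`()).[x]; exact: is_derive_horner.
Qed.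

Definition int01 p : R := RInt (horner p) 0 1.

Lemma int01_is_linear : scalar int01.
Proof.
move=> a p q; rewrite /int01.
rewrite (RInt_ext _ (fun x => plus (scal a p.[x]) q.[x])) => [|x _]; last first.
  by rewrite hornerD hornerZ.
by rewrite RInt_plus ?RInt_scal //; try apply: ex_RInt_scal; exact: ex_RInt_horner.
Qed.
HB.instance Definition _ :=
  GRing.isLinear.Build R {poly R} R *%R int01 int01_is_linear.

Lemma int01_deriv p : int01 p^`() = p.[1] - p.[0].
Proof.
apply: is_RInt_unique; apply: is_RInt_derive => x _; first exact: is_derive_horner.
by apply: ex_derive_continuous; exists (p^`()^`()).[x]; exact: is_derive_horner.
Qed.

Lemma int01_mirror p : int01 (mirror p) = int01 p.
Proof.
have := RInt_comp_lin (horner p) (-1) 1 0 1 (ex_RInt_horner _ _ _).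
rewrite (RInt_ext _ (horner (- mirror p))) => [|x _]; last first.
  by rewrite hornerN horner_comp !hornerE /scal /= /mult /= !RmultE RplusE !mulN1r addrC.
rewrite -/(int01 _) linearN !RmultE !RplusE mulr0 mulN1r add0r addNr /=.
rewrite -opp_RInt_swap; last exact: ex_RInt_horner.
by rewrite -/(int01 p) => /oppr_inj.
Qed.

Lemma int01_mirror_theta p q :
  int01 (mirror (theta p) * q) = int01 (mirror p * theta q).
Proof.
set F := 'X * mirror p * ((1 - 'X) * q).
have dF : F^`() = mirror p * theta q - mirror (theta p) * q.
  have mXp : 'X * mirror p = mirror ((1 - 'X) * p) by rewrite comp_polyM mirror_compl.
  rewrite /F mXp derivM deriv_mirror -mXp /theta /delta comp_polyM comp_polyX.
  ring.
have F0 : F.[0] = 0 by rewrite /F !hornerM hornerX !mul0r.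
have F1 : F.[1] = 0 by rewrite /F !hornerM horner_compl subrr mul0r mulr0.
have := int01_deriv F; rewrite dF linearB F0 F1 subrr.
by move/eqP; rewrite subr_eq0 => /eqP.
Qed.

Lemma int01_theta q : int01 (theta q) = - int01 ((1 - 'X) * q).
Proof.
have theta1 : theta 1 = 0 - 'X :> {poly R}.
  by rewrite /theta /delta mulr1 !derivE !sub0r mulrN1.
have := int01_mirror_theta 1 q.
by rewrite mirror1 mul1r theta1 comp_polyB comp_poly0 comp_polyX sub0r mulNr linearN.
Qed.

End Integral.

Lemma int01_wpoly0 : int01 (wpoly 0) = 1.
Proof. by rewrite wpoly0 -derivX int01_deriv !hornerX subr0. Qed.

Lemma int01_mirror_wpolyM a c :
  int01 (mirror (wpoly a) * wpoly c) = int01 (wpoly (a + c)).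
Proof.
elim: a c => [|a IH] c; first by rewrite wpoly0 mirror1 mul1r.
by rewrite wpolyS int01_mirror_theta -wpolyS IH addSnnS.
Qed.

Lemma int01_wpoly_odd n : odd n -> int01 (wpoly n.+2) = 0.
Proof.
move=> odd_n.
have e : int01 ((1 - 'X) * wpoly n.+1) = - int01 ((1 - 'X) * wpoly n.+1).
  rewrite -[LHS]int01_mirror comp_polyM mirror_compl mulX_mirror_wpoly.
  by rewrite linearZ /= -signr_odd odd_n mulN1r.
move/eqP: e; rewrite eq_sym eqNr => /eqP e.
by rewrite wpolyS int01_theta e oppr0.
Qed.

Lemma sum_binomial_int01_wpoly n :
  \sum_(k < n.+2) int01 (wpoly k) *+ 'C(n.+2, k) = 0.
Proof.
have e : \sum_(k < n.+3) int01 (wpoly k) *+ 'C(n.+2, k)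
         = (-1) ^+ n.+2 * int01 (wpoly n.+2).
  rewrite -int01_mirror -linearZ -sum_binomial_wpoly linear_sum.
  by apply: eq_bigr => k _; rewrite linearMn.
rewrite big_ord_recr binn mulr1n /= in e.
rewrite (canRL (addrK _) e) -signr_odd /= negbK.
case: (boolP (odd n)) => odd_n; last by rewrite expr0 mul1r subrr.
by rewrite int01_wpoly_odd // mulr0 subrr.
Qed.

Lemma int01_hwpoly_mirror_wpoly a c :
  int01 (hwpoly a * mirror (wpoly c))
  = - \sum_(i < a) int01 ('X * wpoly i * mirror (wpoly (a - i.+1 + c))).
Proof.
elim: a c => [|a IH] c; first by rewrite hwpoly0 mul0r linear0 big_ord0 oppr0.
rewrite hwpolyS mulrBl linearB /= [theta _ * _]mulrC -int01_mirror_theta -wpolyS mulrC IH.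
rewrite big_ord_recr /= subnn add0n opprD; congr (- _ - _).
apply: eq_bigr => i _; congr (int01 (_ * mirror (wpoly _))).
by have := ltn_ord i; lia.
Qed.

Lemma int01_X_wpoly_mirror_sym a c :
  int01 ('X * wpoly a * mirror (wpoly c)) + int01 ('X * wpoly c * mirror (wpoly a))
  = int01 (wpoly (a + c)).
Proof.
rewrite -[int01 ('X * wpoly c * _)]int01_mirror !comp_polyM comp_polyX mirrorK -linearD /=.
by rewrite addnC -int01_mirror_wpolyM; congr int01; ring.
Qed.

Lemma int01_hwpoly n : int01 (hwpoly n.+1) *+ 2 = - int01 (wpoly n) *+ n.+1.
Proof.
have := int01_hwpoly_mirror_wpoly n.+1 0; rewrite wpoly0 mirror1 mulr1 => ->.
rewrite !mulNrn; congr (- _).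
set M := fun i j => int01 ('X * wpoly i * mirror (wpoly j)).
set S := \sum_(i < n.+1) _.
have eS : S = \sum_(i < n.+1) M i (n - i)%N.
  by apply: eq_bigr => i _; rewrite subSS addn0.
rewrite mulr2n {1}eS (reindex_inj rev_ord_inj) eS -big_split /=.
rewrite (eq_bigr (fun _ => int01 (wpoly n))) ?sumr_const ?card_ord // => i _.
have le_in : (i <= n)%N by rewrite -ltnS.
by rewrite subSS subKn // addrC int01_X_wpoly_mirror_sym subnKC.
Qed.

Lemma int01_compl_hwquot n :
  int01 ((1 - 'X) * hwquot n) *+ 2 = (-1) ^+ n * (n%:R - 1) * int01 (wpoly n).
Proof.
have -> : (-1) ^+ n * (n%:R - 1) * int01 (wpoly n) = (n%:R - 1) * int01 (wpoly n).
  case: (boolP (odd n)) => [odd_n | even_n].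
    case: n odd_n => [|[|n]] //= odd_n; first by rewrite subrr mulr0 !mul0r.
    by rewrite negbK in odd_n; rewrite int01_wpoly_odd ?mulr0.
  by rewrite -signr_odd (negbTE even_n) mul1r.
have int01_hwquot : int01 (hwquot n) = - int01 (wpoly n).
  rewrite linearB /= int01_deriv !hornerM horner_compl horner_hwpoly0 subrr.
  by rewrite mul0r mulr0 subrr sub0r.
rewrite [(1 - 'X) * _]mulrBl mul1r -hwpoly_hwquot linearB /= int01_hwquot.
rewrite mulrnBl int01_hwpoly -mulr_natl -[- _ *+ _]mulr_natl; ring.
Qed.

Lemma int01_compl_hwquot_wpoly n k : odd (n + k) ->
  int01 ((1 - 'X) * hwquot n * wpoly k.+1) *+ 2
  = (-1) ^+ n * n%:R * int01 (wpoly (n + k.+1)).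
Proof.
move=> odd_nk; set I := int01 (_ * wpoly k.+1).
have sign2 : (-1) ^+ n * (-1) ^+ n = 1 :> R by rewrite -exprMn mulrNN mulr1 expr1n.
have eQ : (1 - 'X) * hwquot n
          = (-1) ^+ n *: (mirror (hwpoly n.+1) + mirror (wpoly n) *+ n) :> {poly R}.
  by rewrite mirror_hwpoly subrK scalerA sign2 scale1r.
have eJ : int01 (mirror (hwpoly n.+1) * wpoly k.+1) = (-1) ^+ k * I.
  rewrite -int01_mirror comp_polyM mirrorK hwpoly_hwquot -mulrA mulrCA mulX_mirror_wpoly.
  by rewrite -scalerAr linearZ /=; congr (_ * int01 _); ring.
have eI : I = (-1) ^+ n * ((-1) ^+ k * I + n%:R * int01 (wpoly (n + k.+1))).
  rewrite {1}/I eQ -scalerAl linearZ /= mulrDl linearD /= eJ (mulrnAl (mirror _)).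
  by rewrite linearMn /= int01_mirror_wpolyM mulr_natl.
have sign_nk : (-1) ^+ n * (-1) ^+ k = -1 :> R by rewrite -exprD -signr_odd odd_nk.
by rewrite mulr2n {1}eI mulrDr mulrA sign_nk; ring.
Qed.

Lemma sum_n_mE (F : nat -> R) m : sum_n_m F 0 m = \sum_(k < m.+1) F k.
Proof.
elim: m => [|m IH]; first by rewrite sum_n_n big_ord1.
by rewrite sum_n_Sm ?IH ?big_ord_recr //; apply/leP.
Qed.

Lemma sum_n_m_from1 (F : nat -> R) m : F 0%N = 0 -> sum_n_m F 1 m = sum_n_m F 0 m.
Proof.
move=> F0; case: m => [|m]; first by rewrite sum_n_m_zero // sum_n_n F0.
by rewrite [RHS]sum_Sn_m //; [rewrite F0 /plus /= Rplus_0_l | apply/leP].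
Qed.

Lemma binomialCE n k : (k <= n)%N -> Binomial.C n k = 'C(n, k)%:R.
Proof.
move=> le_kn; rewrite /Binomial.C !INRE !factE minusE RdivE -(bin_fact le_kn).
by rewrite !natrM mulfK // mulf_neq0 // pnatr_eq0 -lt0n fact_gt0.
Qed.

Lemma size_bern_list m : List.length (bern_list m) = m.+1.
Proof. by elim: m => [|m IH] //=; rewrite List.length_app IH /=; lia. Qed.

Lemma bern_listS m : bern_list m.+1 = (bern_list m ++
  [:: - (INR m.+2)^-1
      * sum_n_m (fun k => Binomial.C m.+2 k * List.nth k (bern_list m) 0) 0 m])%list.
Proof. by []. Qed.

Lemma nth_bern_list m k : (k <= m)%N -> List.nth k (bern_list m) 0 = int01 (wpoly k).
Proof.
elim: m k => [|m IH] k le_km.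
  by move: le_km; rewrite leqn0 => /eqP ->; rewrite int01_wpoly0.
rewrite bern_listS; case: (ltnP k m.+1) => [lt_km | ge_km].
  by rewrite List.app_nth1 ?size_bern_list; [exact: IH | apply/ltP].
have -> : k = m.+1 by apply/eqP; rewrite eqn_leq le_km ge_km.
rewrite List.app_nth2 size_bern_list; last by apply/leP.
rewrite Nat.sub_diag; cbn [List.nth]; rewrite INRE sum_n_mE.
rewrite (eq_bigr (fun i : 'I_m.+1 => int01 (wpoly i) *+ 'C(m.+2, i))) => [|i _]; last first.
  have le_im : (i <= m)%N by rewrite -ltnS.
  by rewrite binomialCE ?IH ?mulr_natl // (leq_trans le_im) // leqW.
have := sum_binomial_int01_wpoly m.
rewrite big_ord_recr /= binSn => /(canRL (addrK _)) ->.
by rewrite sub0r -[int01 _ *+ _]mulr_natl mulrN mulNr opprK mulKf // pnatr_eq0.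
Qed.

Lemma bernoulliE n : bernoulli n = int01 (wpoly n).
Proof. exact: nth_bern_list. Qed.

Lemma harmonic0 : harmonic 0 = 0.
Proof. by rewrite /harmonic sum_n_m_zero. Qed.

Lemma harmonicS k : harmonic k.+1 = harmonic k + k.+1%:R^-1.
Proof. by rewrite /harmonic sum_n_Sm ?INRE //; apply/leP. Qed.

Lemma coef_hwpoly n k :
  (hwpoly n)`_k = (-1) ^+ k * (stirling2 n k * k`!)%:R * harmonic k :> R.
Proof.
elim: n k => [|n IH] [|k].
- by rewrite hwpoly0 coef0 harmonic0 mulr0.
- by rewrite hwpoly0 coef0 stirling2_0S mul0n mulr0 mul0r.
- by rewrite hwpoly_hwquot coefXM harmonic0 mulr0.
rewrite hwpoly_hwquot coefXM [LHS]/= /hwquot coefB /delta coef_deriv mulrBl mul1r coefB.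
rewrite coefXM [LHS]/= !IH coef_wpoly stirling2SS factS exprS harmonicS !(natrM, natrD).
by field; rewrite addrC natr1 pnatr_eq0.
Qed.

Lemma size_hwpoly n : (size (hwpoly n : {poly R}) <= n.+1)%N.
Proof.
by apply/leq_sizeP => k lt_nk; rewrite coef_hwpoly stirling2_small // mul0n mulr0 mul0r.
Qed.

Lemma geom_polyE n x : geom_poly n (- x) = (wpoly n).[x].
Proof.
rewrite /geom_poly sum_n_mE (horner_coef_wide _ (size_wpoly _ n)); apply: eq_bigr => k _.
by rewrite coef_wpoly !RmultE !INRE factE RpowE RoppE (exprNn x) natrM; ring.
Qed.

Lemma harm_geom_polyE n x : harm_geom_poly n (- x) = (hwpoly n).[x].
Proof.
rewrite /harm_geom_poly sum_n_m_from1; last by rewrite harmonic0 !RmultE mulr0 mul0r.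
rewrite sum_n_mE (horner_coef_wide _ (size_hwpoly n)); apply: eq_bigr => k _.
by rewrite coef_hwpoly !RmultE !INRE factE RpowE RoppE (exprNn x) natrM; ring.
Qed.

Section RealStatements.
Local Open Scope R_scope.

Lemma RInt01_horner (f : R -> R) p :
  (forall x, 0 < x -> f x = p.[x]) -> RInt f 0 1 = int01 p.
Proof.
move=> fE; apply: RInt_ext => x; rewrite Rmin_left ?Rmax_right; try exact: Rle_0_1.
by move=> [x_gt0 _]; apply: fE.
Qed.

Lemma harm_geom_poly_div n x : 0 < x ->
  (1 - x) / x * harm_geom_poly n.+1 (- x) = ((1 - 'X) * hwquot n).[x].
Proof.
move=> /RltP x_gt0; rewrite harm_geom_polyE hwpoly_hwquot !hornerM hornerX horner_compl.
by rewrite !RmultE RdivE RminusE mulrA divfK // lt0r_neq0.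
Qed.

Lemma double_sign_eq n (a x b : R) :
  a *+ 2 = (-1) ^+ n * x * b -> a = (-1) ^ n * (x / 2) * b.
Proof.
have two_neq0 : 2%:R != 0 :> R by rewrite pnatr_eq0.
move=> a2; apply: (mulIf two_neq0); rewrite mulr_natr a2 RpowE !RmultE RdivE.
by rewrite (_ : -1 = - (1 : R)) // (_ : 2 = 2%:R :> R) // !R1E; field.
Qed.

Lemma int_harm_geom_poly n :
  RInt (fun x => (1 - x) / x * harm_geom_poly (S n) (- x)) 0 1
  = (-1) ^ n * ((INR n - 1) / 2) * bernoulli n.
Proof.
rewrite (RInt01_horner _ ((1 - 'X) * hwquot n)) => [|x]; last exact: harm_geom_poly_div.
by apply: (double_sign_eq n); rewrite int01_compl_hwquot bernoulliE INRE.
Qed.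

Lemma int_harm_geom_poly_geom_poly n m : (1 <= m)%coq_nat -> Nat.Even (n + m) ->
  RInt (fun x => (1 - x) / x * harm_geom_poly (S n) (- x) * geom_poly m (- x)) 0 1
  = (-1) ^ n * (INR n / 2) * bernoulli (n + m).
Proof.
case: m => [/leP // | k _ [p even_nk]].
have odd_nk : odd (n + k).
  move/(congr1 odd): even_nk.
  by rewrite -[(2 * p)%coq_nat]/(2 * p)%N mul2n odd_double addnS /= => /negbFE.
rewrite (RInt01_horner _ ((1 - 'X) * hwquot n * wpoly k.+1)) => [|x x_gt0]; last first.
  by rewrite harm_geom_poly_div // geom_polyE !hornerM.
apply: (double_sign_eq n).
by rewrite int01_compl_hwquot_wpoly // bernoulliE INRE addnS.
Qed.

End RealStatements.

End HarmonicGeometric.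

Theorem theorem4 :
  (forall n : nat,
     RInt (fun x => (1 - x) / x * harm_geom_poly (S n) (- x)) 0 1
     = (-1) ^ n * ((INR n - 1) / 2) * bernoulli n)
  /\
  (forall n m : nat, (1 <= m)%nat -> Nat.Even (n + m) ->
     RInt (fun x => (1 - x) / x * harm_geom_poly (S n) (- x) * geom_poly m (- x)) 0 1
     = (-1) ^ n * (INR n / 2) * bernoulli (n + m)).
Proof.
split.
- exact HarmonicGeometric.int_harm_geom_poly.
- exact HarmonicGeometric.int_harm_geom_poly_geom_poly.
Qed.
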